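(* Let $R$ be an order in a quadratic number field. Then $R$ is super-multiplicative: for every pair of non-zero ideals $I,J$ of $R$ one has $N(IJ)\geq N(I)N(J)$.
   Context: An order in a number field $K$ is a subring of $K$ with fraction field $K$ whose additive group is finitely generated; a quadratic number field is a number field of degree $2$ over $\mathbb{Q}$. For a non-zero ideal $I$ of $R$, $N(I)=[R:I]$ is its index as an additive subgroup. A ring is super-multiplicative if for all ideals $I,J$ with $[R:IJ]$ finite one has $N(IJ)\geq N(I)N(J)$. *)

(* A number field is modelled as a finite-dimensional field
   extension L of rat (fieldExtType rat); quadratic means \dim {:L} = 2. *)
From HB Require Import structures.
From mathcomp Require Import all_boot all_order all_algebra all_field.
Set Implicit Arguments. Unset Strict Implicit. Unset Printing Implicit Defensive.
Import Order.TTheory GRing.Theory Num.Theory.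
Local Open Scope ring_scope.

Section Orders.
Variable L : fieldExtType rat.

Definition is_subring (R : L -> Prop) : Prop :=
  [/\ R 1,
      (forall x y, R x -> R y -> R (x - y)) &
      (forall x y, R x -> R y -> R (x * y))].

Definition add_fin_gen (R : L -> Prop) : Prop :=
  exists (n : nat) (g : 'I_n -> L),
    (forall i, R (g i)) /\
    (forall x, R x <-> exists c : 'I_n -> int, x = \sum_(i < n) g i *~ c i).

Definition frac_field_is_L (R : L -> Prop) : Prop :=
  forall x : L, exists a b, [/\ R a, R b, b != 0 & x = a / b].

Definition is_order (R : L -> Prop) : Prop :=
  [/\ is_subring R, add_fin_gen R & frac_field_is_L R].

Definition is_ideal (R I : L -> Prop) : Prop :=
  [/\ (forall x, I x -> R x), I 0,
      (forall x y, I x -> I y -> I (x + y)) &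
      (forall r x, R r -> I x -> I (r * x))].

Definition nonzero_ideal (I : L -> Prop) : Prop := exists x, I x /\ x != 0.

Definition ideal_mul (I J : L -> Prop) : L -> Prop :=
  fun x => exists (n : nat) (a b : 'I_n -> L),
    (forall i, I (a i) /\ J (b i)) /\ x = \sum_(i < n) a i * b i.

(* [R : I] = n as additive groups: r_0..r_{n-1} in R form a complete,
   irredundant system of representatives of R/I. *)
Definition has_index (R I : L -> Prop) (n : nat) : Prop :=
  exists r : 'I_n -> L,
    (forall i, R (r i)) /\
    (forall x, R x -> exists! i, I (x - r i)).

End Orders.

(* An order R of a quadratic field is Z[w] for some w with w^2 = s w + t.  Indeed,
   pick th in R outside Q: by finite generation R has bounded denominators with
   respect to 1, th; R meets Q in Z, because 1/m in R would put every 1/m^k in R;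
   and the th-coordinates of the elements of R form a cyclic group.

   A nonzero ideal of Z[w] contains a nonzero integer (the norm of any of its nonzero
   elements), hence has a Hermite basis C a, C (b + w) with a | N(b + w) = b^2 + b s - t,
   and its index is a C^2.  For I = C [a, b + w] and J = C' [a', b' + w], the product
   IJ lies in the span of the four products of basis elements, and all 2 x 2 minors of
   their coordinates are divisible by N(I) N(J); this is where a | N(b + w) and
   a' | N(b' + w) are used.  By bilinearity, N(I) N(J) divides the minor of any two
   elements of IJ, in particular the minor of the Hermite basis of IJ, which is N(IJ). *)

From HB Require Import structures.
From mathcomp Require Import all_boot all_order all_algebra all_field.
From mathcomp Require Import zify ring.
From Stdlib Require Import Classical Wf_nat.
Import Order.TTheory GRing.Theory Num.Theory.
Set Implicit Arguments. Unset Strict Implicit. Unset Printing Implicit Defensive.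
Local Open Scope ring_scope.

Lemma int_subgroup_cyclic (P : int -> Prop) (x0 : int) :
  (forall x y, P x -> P y -> P (x - y)) -> P x0 -> x0 != 0 ->
  exists d : nat, [/\ (0 < d)%N, P d & forall x, P x -> (d %| x)%Z].
Proof.
move=> PB Px0 x0_neq0.
have P0 : P 0 by rewrite -(subrr x0); apply: PB.
have PN x : P x -> P (- x) by move=> Px; rewrite -sub0r; apply: PB.
have PM x q : P x -> P (x * q).
  move=> Px; elim/int_rec: q => [|n IH|n IH]; first by rewrite mulr0.
    have -> : x * n.+1 = x * n - - x by rewrite intS; ring.
    by apply: PB => //; apply: PN.
  have -> : x * - (n.+1 : int) = x * - (n : int) - x by rewrite intS; ring.
  exact: PB.
have P_abs : (0 < `|x0|)%N /\ P `|x0|%N.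
  split; first by rewrite absz_gt0.
  rewrite abszE; have [x0_ge0|x0_lt0] := leP 0 x0.
    by rewrite ger0_norm.
  by rewrite ltr0_norm //; apply: PN.
have [d [[[d_gt0 Pd] d_min] _]] := @dec_inh_nat_subset_has_unique_least_element
  (fun n => (0 < n)%N /\ P n) (fun n => classic _)
  (ex_intro _ _ P_abs).
exists d; split=> // x Px; apply/dvdz_mod0P.
have r_ge0 : 0 <= (x %% d)%Z by apply: modz_ge0; rewrite eqz_nat -lt0n.
have r_lt : (x %% d)%Z < d by apply: ltz_pmod.
have Pr : P (x %% d)%Z.
  have -> : (x %% d)%Z = x - d%:Z * (x %/ d)%Z by lia.
  exact/PB/PM.
apply/eqP/negbNE/negP => r_neq0.
suff : (d <= `|(x %% d)%Z|)%N by lia.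
by apply/ssrnat.leP/d_min; split; [lia | rewrite gez0_abs].
Qed.

Lemma dvdz_det_sum (T : finType) (D : int) (p q a b : T -> int) :
  (forall k l, (D %| p k * q l - q k * p l)%Z) ->
  (D %| (\sum_k a k * p k) * (\sum_l b l * q l)
        - (\sum_k a k * q k) * (\sum_l b l * p l))%Z.
Proof.
move=> Dpq; rewrite !mulr_suml -sumrB; apply: rpred_sum => k _.
rewrite !mulr_sumr -sumrB; apply: rpred_sum => l _.
have -> : a k * p k * (b l * q l) - a k * q k * (b l * p l)
        = a k * b l * (p k * q l - q k * p l) by ring.
exact: dvdz_mull.
Qed.

Lemma mulrn_rat_inj (V : lmodType rat) (d : nat) :
  (0 < d)%N -> injective (fun x : V => x *+ d).
Proof.
by move=> d_gt0 x y; rewrite /= -!scaler_nat => /scalerI; apply; rewrite pnatr_eq0 -lt0n.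
Qed.

Section ZSpan.
Variables (V : zmodType) (T : finType).

Definition zspan (g : T -> V) (x : V) : Prop :=
  exists c : T -> int, x = \sum_k g k *~ c k.

Variable g : T -> V.

Lemma zspan0 : zspan g 0.
Proof. by exists (fun=> 0); rewrite big1 // => k _; rewrite mulr0z. Qed.

Lemma zspanZ x k : zspan g x -> zspan g (x *~ k).
Proof.
move=> [c ->]; exists (fun l => c l * k).
by rewrite mulrz_suml; apply: eq_bigr => l _; rewrite mulrzA.
Qed.

Lemma zspanN x : zspan g x -> zspan g (- x).
Proof. by rewrite -mulrN1z; apply: zspanZ. Qed.

Lemma zspanD x y : zspan g x -> zspan g y -> zspan g (x + y).
Proof.
move=> [c ->] [c' ->]; exists (fun k => c k + c' k).
by rewrite -big_split; apply: eq_bigr => k _; rewrite mulrzDr.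
Qed.

Lemma zspan_gen k : zspan g (g k).
Proof.
exists (fun l => (l == k)%:Z); rewrite (bigD1 k) //= eqxx mulr1z big1 ?addr0 // => l.
by move=> /negPf ->; rewrite mulr0z.
Qed.

End ZSpan.

Lemma zspan_mul (V : pzRingType) (T T' : finType) (e : T -> V) (f : T' -> V) x y :
  zspan e x -> zspan f y -> zspan (fun k : T * T' => e k.1 * f k.2) (x * y).
Proof.
move=> [c ->] [c' ->]; exists (fun k => c k.1 * c' k.2).
rewrite -(pair_bigA _ (fun i j => e i * f j *~ (c i * c' j))) mulr_suml.
apply: eq_bigr => i _; rewrite mulr_sumr; apply: eq_bigr => j _.
by rewrite mulrzAl mulrzAr -mulrzA mulrC.
Qed.

Section Subring.
Variables (L : fieldExtType rat) (R : L -> Prop).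
Hypothesis R_subring : is_subring R.

Lemma subring1 : R 1. Proof. by case: R_subring. Qed.

Lemma subringB x y : R x -> R y -> R (x - y).
Proof. by case: R_subring => _ RB _; apply: RB. Qed.

Lemma subringM x y : R x -> R y -> R (x * y).
Proof. by case: R_subring => _ _ RM; apply: RM. Qed.

Lemma subring0 : R 0. Proof. by rewrite -(subrr 1); apply: subringB; exact: subring1. Qed.

Lemma subringN x : R x -> R (- x).
Proof. by move=> Rx; rewrite -sub0r; apply: subringB => //; exact: subring0. Qed.

Lemma subringD x y : R x -> R y -> R (x + y).
Proof. by move=> Rx Ry; rewrite -(opprK y); apply: subringB => //; exact: subringN. Qed.

Lemma subring_int (z : int) : R z%:~R.
Proof.
have Rnat (n : nat) : R n%:R.
  elim: n => [|n IH]; first exact: subring0.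
  by rewrite -addn1 natrD; apply: subringD => //; exact: subring1.
by case: z => n; [exact: Rnat | rewrite NegzE intrN; apply: subringN; exact: Rnat].
Qed.

Lemma subring_mulz x k : R x -> R (x *~ k).
Proof. by move=> Rx; rewrite -mulrzr; apply: subringM => //; exact: subring_int. Qed.

Lemma subringX x n : R x -> R (x ^+ n).
Proof.
move=> Rx; elim: n => [|n IH]; first by rewrite expr0; exact: subring1.
by rewrite exprS; apply: subringM.
Qed.

Lemma is_ideal_mul I J : is_ideal R I -> is_ideal R J -> is_ideal R (ideal_mul I J).
Proof.
move=> [IR I0 ID IM] [JR J0 JD JM]; split.
- move=> _ [n [a [b [abIJ ->]]]]; apply: (big_ind R); [exact: subring0 | exact: subringD |].
  by move=> i _; have [/IR Ra /JR Rb] := abIJ i; apply: subringM.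
- by exists 0%N, (fun=> 0), (fun=> 0); rewrite big_ord0.
- move=> _ _ [n [a [b [abIJ ->]]]] [n' [a' [b' [abIJ' ->]]]].
  pose glue (u : 'I_n -> L) (u' : 'I_n' -> L) i :=
    match split i with inl k => u k | inr k => u' k end.
  exists (n + n')%N, (glue a a'), (glue b b'); split.
    by move=> i; rewrite /glue; case: (split i).
  rewrite big_split_ord; congr (_ + _); apply: eq_bigr => i _.
    by rewrite /glue (unsplitK (inl _ i) : split (lshift n' i) = inl i).
  by rewrite /glue (unsplitK (inr _ i) : split (rshift n i) = inr i).
- move=> r _ Rr [n [a [b [abIJ ->]]]]; exists n, (fun i => r * a i), b; split.
    by move=> i; have [Ia Jb] := abIJ i; split => //; apply: IM.
  by rewrite mulr_sumr; apply: eq_bigr => i _; rewrite mulrA.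
Qed.

Lemma idealB I x y : is_ideal R I -> I x -> I y -> I (x - y).
Proof.
move=> [_ _ ID IM] Ix Iy; rewrite -mulN1r; apply: ID => //.
by apply: IM => //; apply/subringN/subring1.
Qed.

End Subring.

Lemma nonzero_ideal_mul (L : fieldExtType rat) (I J : L -> Prop) :
  nonzero_ideal I -> nonzero_ideal J -> nonzero_ideal (ideal_mul I J).
Proof.
move=> [x [Ix x_neq0]] [y [Jy y_neq0]]; exists (x * y); split; last exact: mulf_neq0.
by exists 1%N, (fun=> x), (fun=> y); rewrite big_ord1.
Qed.

Lemma ideal_mul_zspan (L : fieldExtType rat) (T T' : finType) (e : T -> L) (f : T' -> L)
    (I J : L -> Prop) :
  (forall x, I x -> zspan e x) -> (forall y, J y -> zspan f y) ->
  forall z, ideal_mul I J z -> zspan (fun k : T * T' => e k.1 * f k.2) z.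
Proof.
move=> Ie Jf _ [n [a [b [abIJ ->]]]].
apply: big_ind; [exact: zspan0 | exact: zspanD |].
by move=> i _; have [/Ie ? /Jf ?] := abIJ i; apply: zspan_mul.
Qed.

Section QuadraticOrder.
Variables (L : fieldExtType rat) (w : L) (s t : int).
Hypothesis w_sq : w ^+ 2 = s%:~R * w + t%:~R.
Hypothesis w_indep : forall u v : int, u%:~R + v%:~R * w = 0 :> L -> u = 0 /\ v = 0.
Variable R : L -> Prop.
Hypothesis R_zwP : forall x, R x <-> exists u v : int, x = u%:~R + v%:~R * w.

Definition zw (u v : int) : L := u%:~R + v%:~R * w.

Lemma R_zw u v : R (zw u v). Proof. by apply/R_zwP; exists u, v. Qed.

Lemma zw0 : zw 0 0 = 0. Proof. by rewrite /zw !mul0r addr0. Qed.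

Lemma zwD u v u' v' : zw u v + zw u' v' = zw (u + u') (v + v').
Proof. by rewrite /zw !intrD; ring. Qed.

Lemma zwB u v u' v' : zw u v - zw u' v' = zw (u - u') (v - v').
Proof. by rewrite /zw !intrB; ring. Qed.

Lemma zwZ u v k : zw u v *~ k = zw (k * u) (k * v).
Proof. by rewrite /zw -mulrzr !intrM; ring. Qed.

Lemma zwM u v u' v' :
  zw u v * zw u' v' = zw (u * u' + v * v' * t) (u * v' + v * u' + v * v' * s).
Proof.
apply/eqP; rewrite -subr_eq0; apply/eqP.
transitivity ((v * v')%:~R * (w ^+ 2 - (s%:~R * w + t%:~R)) : L).
  by rewrite /zw !intrD !intrM; ring.
by rewrite w_sq subrr mulr0.
Qed.

Lemma zw_inj u v u' v' : zw u v = zw u' v' -> u = u' /\ v = v'.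
Proof.
move/eqP; rewrite -subr_eq0 zwB => /eqP /w_indep [/eqP + /eqP].
by rewrite !subr_eq0 => /eqP -> /eqP ->.
Qed.

Lemma zw_subring : is_subring R.
Proof.
split.
- by apply/R_zwP; exists 1, 0; rewrite mul0r addr0.
- by move=> _ _ /R_zwP [u [v ->]] /R_zwP [u' [v' ->]]; rewrite zwB; apply: R_zw.
- by move=> _ _ /R_zwP [u [v ->]] /R_zwP [u' [v' ->]]; rewrite zwM; apply: R_zw.
Qed.

Lemma zw_sum (T : finType) (p q c : T -> int) :
  \sum_k zw (p k) (q k) *~ c k = zw (\sum_k c k * p k) (\sum_k c k * q k).
Proof.
under eq_bigr do rewrite zwZ.
by apply: (big_rec3 (fun x u v => x = zw u v)) => [|k x u v _ ->]; rewrite ?zw0 ?zwD.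
Qed.

Definition det_dvd (D : int) (x y : L) : Prop :=
  forall u v u' v', x = zw u v -> y = zw u' v' -> (D %| u * v' - v * u')%Z.

Lemma det_dvd_zwP D u v u' v' :
  det_dvd D (zw u v) (zw u' v') <-> (D %| u * v' - v * u')%Z.
Proof.
split=> [|Ddet u1 v1 u1' v1' /zw_inj [<- <-] /zw_inj [<- <-] //]; exact.
Qed.

Lemma zspan_det_dvd (T : finType) (g : T -> L) (D : int) :
  (forall k, R (g k)) -> (forall k l, det_dvd D (g k) (g l)) ->
  forall x y, zspan g x -> zspan g y -> det_dvd D x y.
Proof.
move=> Rg gD x y.
have [pq gE] : exists pq : T -> int * int, forall k, g k = zw (pq k).1 (pq k).2.
  apply: (fin_all_exists (P := fun k pq => g k = zw pq.1 pq.2)) => k.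
  by have /R_zwP [u [v ->]] := Rg k; exists (u, v).
have zspan_coord z : zspan g z ->
    exists c, z = zw (\sum_k c k * (pq k).1) (\sum_k c k * (pq k).2).
  by move=> [c ->]; exists c; rewrite -zw_sum; apply: eq_bigr => k _; rewrite gE.
move=> /zspan_coord [c ->] /zspan_coord [c' ->] u v u' v' /zw_inj [<- <-] /zw_inj [<- <-].
apply: dvdz_det_sum => k l.
by have := gD k l; rewrite !gE => /det_dvd_zwP.
Qed.

Definition hnf (A B C : int) (k : bool) : L := if k then zw B C else zw A 0.

Lemma R_hnf A B C k : R (hnf A B C k).
Proof. by case: k; apply: R_zw. Qed.

Lemma zspan_hnfP A B C x :
  zspan (hnf A B C) x <-> exists i j : int, x = zw (i * A + j * B) (j * C).
Proof.
split=> [[c ->]|[i [j ->]]].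
  by exists (c false), (c true); rewrite big_bool /= !zwZ zwD; congr zw; ring.
by exists (fun k => if k then j else i); rewrite big_bool /= !zwZ zwD; congr zw; ring.
Qed.

Lemma hnf_reduce (A C : nat) (B u v : int) : (0 < A)%N -> (0 < C)%N ->
  exists i j : nat, [/\ (i < A)%N, (j < C)%N & zspan (hnf A B C) (zw u v - zw i j)].
Proof.
move=> A_gt0 C_gt0; pose q := (v %/ C)%Z.
exists `|((u - q * B) %% A)%Z|%N, `|(v %% C)%Z|%N; split; [lia | lia |].
apply/zspan_hnfP; exists ((u - q * B) %/ A)%Z, q; rewrite zwB; congr zw; lia.
Qed.

Lemma hnf_rep_uniq (A C : nat) (B : int) (u u' v v' : nat) :
  (u < A)%N -> (u' < A)%N -> (v < C)%N -> (v' < C)%N ->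
  zspan (hnf A B C) (zw (u%:Z - u'%:Z) (v%:Z - v'%:Z)) -> u = u' /\ v = v'.
Proof.
move=> uA u'A vC v'C /zspan_hnfP [i [j /zw_inj [eu ev]]].
have j0 : j = 0 by nia.
move: eu ev; rewrite j0 => eu ev.
have i0 : i = 0 by nia.
by move: eu; rewrite i0; lia.
Qed.

Lemma has_index_hnf (I : L -> Prop) (A C : nat) (B : int) :
  (0 < A)%N -> (0 < C)%N -> (forall x, I x <-> zspan (hnf A B C) x) ->
  has_index R I (A * C).
Proof.
move=> A_gt0 C_gt0 IE; pose r (k : 'I_(A * C)) := zw (k %% A)%N (k %/ A)%N.
exists r; split=> [k|_ /R_zwP [u [v ->]]]; first exact: R_zw.
have [i [j [iA jC span_ij]]] := hnf_reduce B u v A_gt0 C_gt0.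
have k_lt : (j * A + i < A * C)%N by nia.
pose kk := Ordinal k_lt.
have [rk_i rk_j] : (kk %% A = i)%N /\ (kk %/ A = j)%N.
  by rewrite /= modnMDl divnMDl // modn_small // divn_small // addn0.
exists kk; split=> [|k /IE span_k]; first by rewrite IE /r rk_i rk_j.
have := zspanD span_k (zspanN span_ij).
have -> : zw u v - r k + - (zw u v - zw i j) = zw i j - r k by ring.
have div_lt (m : 'I_(A * C)) : (m %/ A < C)%N.
  by rewrite ltn_divLR //; have := ltn_ord m; nia.
rewrite zwB -rk_i -rk_j => /hnf_rep_uniq [||||ki kj]; rewrite ?ltn_mod ?div_lt //.
by apply: ord_inj; rewrite (divn_eq kk A) (divn_eq k A) ki kj.
Qed.

Section Ideal.
Variable I : L -> Prop.
Hypothesis I_ideal : is_ideal R I.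

Lemma ideal_zwM u v x : I x -> I (zw u v * x).
Proof. by case: I_ideal => _ _ _ IM; apply/IM/R_zw. Qed.

Lemma ideal_zwB u v u' v' : I (zw u v) -> I (zw u' v') -> I (zw (u - u') (v - v')).
Proof. by rewrite -zwB; apply: (idealB zw_subring). Qed.

Lemma ideal_hnf_comb A B C i j :
  I (zw A 0) -> I (zw B C) -> I (zw (i * A + j * B) (j * C)).
Proof.
case: I_ideal => _ _ ID _ IA IB.
have -> : zw (i * A + j * B) (j * C) = zw i 0 * zw A 0 + zw j 0 * zw B C.
  by rewrite !zwM zwD; congr zw; ring.
by apply: ID; apply: ideal_zwM.
Qed.

(* Multiply by the conjugate: [zw (u + v s) (- v) * zw u v] is the norm of [zw u v]. *)
Lemma ideal_nonzero_int : nonzero_ideal I -> exists2 n : int, n != 0 & I (zw n 0).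
Proof.
case: I_ideal => IR _ _ _ [x [Ix x_neq0]].
have /R_zwP [u [v x_uv]] := IR x Ix; rewrite -/(zw u v) in x_uv.
pose n := u * u + u * v * s - v * v * t.
have norm_x : zw (u + v * s) (- v) * x = zw n 0.
  by rewrite x_uv zwM; congr zw; rewrite /n; ring.
exists n; last by rewrite -norm_x; apply: ideal_zwM.
apply: contra_neq x_neq0 => n0.
have /eqP : zw (u + v * s) (- v) * x = 0 by rewrite norm_x n0 zw0.
rewrite mulf_eq0 => /orP [|/eqP //]; rewrite -zw0 => /eqP /zw_inj [uv0 v0].
by rewrite x_uv; congr zw; lia.
Qed.

Lemma ideal_hnf_basis : nonzero_ideal I ->
  exists (A C : nat) (B : int),
    [/\ (0 < A)%N, (0 < C)%N & forall x, I x <-> zspan (hnf A B C) x].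
Proof.
move=> I_nz; have [n n_neq0 In] := ideal_nonzero_int I_nz.
have U_sub a a' : I (zw a 0) -> I (zw a' 0) -> I (zw (a - a') 0).
  by move=> Ia /(ideal_zwB Ia); rewrite subrr.
have [A [A_gt0 IA A_dvd]] := int_subgroup_cyclic U_sub In n_neq0.
have V_sub v v' : (exists u, I (zw u v)) -> (exists u, I (zw u v')) ->
    exists u, I (zw u (v - v')).
  by move=> [u Iu] [u' Iu']; exists (u - u'); apply: ideal_zwB.
have IwA : I (zw 0 A).
  have -> : zw 0 A = zw 0 1 * zw A 0 by rewrite zwM; congr zw; ring.
  exact: ideal_zwM.
have [|C [C_gt0 [B IB] C_dvd]] := int_subgroup_cyclic V_sub (ex_intro _ 0 IwA).
  by rewrite eqz_nat -lt0n.
exists A, C, B; split=> // x; rewrite zspan_hnfP.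
split=> [Ix|[i [j ->]]]; last exact: ideal_hnf_comb.
case: I_ideal => IR _ _ _; have /R_zwP [u [v x_uv]] := IR x Ix.
rewrite -/(zw u v) in x_uv; rewrite x_uv in Ix *.
have /dvdzP [j v_j] := C_dvd v (ex_intro _ u Ix).
have := ideal_zwB Ix (ideal_hnf_comb 0 j IA IB).
rewrite mul0r add0r v_j subrr => /A_dvd /dvdzP [i u_i].
by exists i, j; rewrite -u_i; congr zw; ring.
Qed.

Lemma ideal_hnf_primitive (A C : nat) (B : int) :
  (0 < C)%N -> (forall x, I x <-> zspan (hnf A B C) x) ->
  exists a b c : int, [/\ A = a * C :> int, B = b * C & t = b ^+ 2 + b * s - a * c].
Proof.
move=> C_gt0 IE; have I_gen k : I (hnf A B C k) by apply/IE/zspan_gen.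
have /IE/zspan_hnfP [_ [a /zw_inj [_ A_a]]] : I (zw 0 A).
  have -> : zw 0 A = zw 0 1 * zw A 0 by rewrite zwM; congr zw; ring.
  exact: ideal_zwM (I_gen false).
have /IE/zspan_hnfP [i [j /zw_inj [Ct_ij BCs_j]]] : I (zw (C%:Z * t) (B + C%:Z * s)).
  have -> : zw (C%:Z * t) (B + C%:Z * s) = zw 0 1 * zw B C by rewrite zwM; congr zw; ring.
  exact: ideal_zwM (I_gen true).
have B_j : B = (j - s) * C by rewrite mulrBl -BCs_j; ring.
exists a, (j - s), (- i); split=> //.
apply: (@mulfI _ C%:Z); first by rewrite eqz_nat -lt0n.
by rewrite Ct_ij A_a B_j; ring.
Qed.

End Ideal.

Lemma hnf_mul_det_dvd (a b c a' b' c' C C' : int) :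
  t = b ^+ 2 + b * s - a * c -> t = b' ^+ 2 + b' * s - a' * c' ->
  let g k := hnf (a * C) (b * C) C k.1 * hnf (a' * C') (b' * C') C' k.2 in
  forall k l, det_dvd (a * C * C * (a' * C' * C')) (g k) (g l).
Proof.
(* The 16 cases come with k, l ranging over (true, true), (true, false), (false, true),
   (false, false); each witness is the minor divided by the modulus. *)
move=> t_I t_J g [[] []] [[] []]; rewrite /g /= !zwM; apply/det_dvd_zwP/dvdzP.
- by exists 0; ring.
- by exists (- c); rewrite t_I; ring.
- by exists (- c'); rewrite t_J; ring.
- by exists (- (b + b' + s)); ring.
- by exists c; rewrite t_I; ring.
- by exists 0; ring.
- by exists (b - b'); ring.
- by exists (- a'); ring.
- by exists c'; rewrite t_J; ring.
- by exists (b' - b); ring.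
- by exists 0; ring.
- by exists (- a); ring.
- by exists (b + b' + s); ring.
- by exists a'; ring.
- by exists a; ring.
- by exists 0; ring.
Qed.

Lemma index_ideal_mul_ge I J :
  is_ideal R I -> is_ideal R J -> nonzero_ideal I -> nonzero_ideal J ->
  exists m n k : nat, [/\ has_index R I m, has_index R J n,
    has_index R (ideal_mul I J) k & (m * n <= k)%N].
Proof.
move=> I_ideal J_ideal I_nz J_nz.
have IJ_ideal := is_ideal_mul zw_subring I_ideal J_ideal.
have [A [C [B [A_gt0 C_gt0 IE]]]] := ideal_hnf_basis I_ideal I_nz.
have [A' [C' [B' [A'_gt0 C'_gt0 JE]]]] := ideal_hnf_basis J_ideal J_nz.
have [A2 [C2 [B2 [A2_gt0 C2_gt0 IJE]]]] :=
  ideal_hnf_basis IJ_ideal (nonzero_ideal_mul I_nz J_nz).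
exists (A * C)%N, (A' * C')%N, (A2 * C2)%N; split; try exact: has_index_hnf.
have [a [b [c [A_a B_b t_I]]]] := ideal_hnf_primitive I_ideal C_gt0 IE.
have [a' [b' [c' [A_a' B_b' t_J]]]] := ideal_hnf_primitive J_ideal C'_gt0 JE.
rewrite A_a B_b in IE; rewrite A_a' B_b' in JE.
have IJ_span := ideal_mul_zspan (fun x => (IE x).1) (fun y => (JE y).1).
have IJ_gen k : ideal_mul I J (hnf A2 B2 C2 k) by apply/IJE/zspan_gen.
have R_gen k : R (hnf (a * C) (b * C) C k.1 * hnf (a' * C') (b' * C') C' k.2).
  by apply: (subringM zw_subring); apply: R_hnf.
have := zspan_det_dvd R_gen (hnf_mul_det_dvd t_I t_J)
  (IJ_span _ (IJ_gen false)) (IJ_span _ (IJ_gen true)).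
have -> : a * C * C * (a' * C' * C') = (A * C * (A' * C'))%N :> int.
  by rewrite !PoszM A_a A_a'.
rewrite /= det_dvd_zwP mul0r subr0 -PoszM dvdzE /= => dvd_IJ.
by apply: dvdn_leq dvd_IJ; rewrite muln_gt0 A2_gt0.
Qed.

End QuadraticOrder.

Section OrderBasis.
Variables (L : fieldExtType rat) (R : L -> Prop).
Hypotheses (L_dim2 : \dim {:L} = 2%N) (R_order : is_order R).

Let R_subring : is_subring R. Proof. by case: R_order. Qed.

Lemma order_irrational : exists2 th, R th & th \notin <[1]>%VS.
Proof.
apply: NNPP => no_th.
have R_rat x : R x -> x \in <[1]>%VS.
  by move=> Rx; apply/negPn/negP => x_irr; apply: no_th; exists x.
have [x0 x0_irr] : exists x0 : L, x0 \notin <[1]>%VS.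
  apply: NNPP => all_rat; have : ({:L} <= <[1]>)%VS.
    by apply/subvP => x _; apply/negPn/negP => x_irr; apply: all_rat; exists x.
  by move/dimvS; rewrite dim_vline oner_eq0 L_dim2.
case: R_order => _ _ /(_ x0) [a [b [Ra Rb _ x0_ab]]].
case/negP: x0_irr; rewrite x0_ab.
have /vlineP [p ->] := R_rat a Ra; have /vlineP [q ->] := R_rat b Rb.
by apply/vlineP; exists (p / q); rewrite -!/(in_alg L _) fmorph_div.
Qed.

Section Coordinates.
Variable th : L.
Hypothesis th_irr : th \notin <[1]>%VS.

Definition qth (p q : rat) : L := p%:A + q *: th.

Lemma qth_surj x : exists p q, x = qth p q.
Proof.
have th_1_free : free [:: th; 1] by rewrite free_cons seq1_free oner_eq0 andbT span_seq1.
have span_th_1 : <<[:: th; 1%R]>>%VS = fullv.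
  apply/eqP; rewrite eqEdim subvf /=.
  by move: th_1_free; rewrite /free => /eqP ->; rewrite L_dim2.
have := memvf x; rewrite -span_th_1 span_cons span_seq1.
move=> /memv_addP [_ /vlineP [q ->] [_ /vlineP [p ->] ->]].
by exists p, q; rewrite /qth addrC.
Qed.

Lemma qth_inj p q p' q' : qth p q = qth p' q' -> p = p' /\ q = q'.
Proof.
move=> /eqP; rewrite -subr_eq0 => /eqP E.
have q_eq : q = q'.
  apply: contraNeq th_irr; rewrite -subr_eq0 => q_neq.
  apply/vlineP; exists ((q - q')^-1 * (p' - p)).
  rewrite -scalerA -[th](scalerK q_neq) scalerBl scalerBl; congr (_ *: _).
  by apply/eqP; rewrite -subr_eq0 -E /qth; apply/eqP; ring.
split=> //; apply/eqP; rewrite -subr_eq0.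
have : (p - p') *: (1 : L) = 0 by rewrite scalerBl -E /qth q_eq; ring.
by move/eqP; rewrite scaler_eq0 oner_eq0 orbF.
Qed.

Definition zth : L -> Prop := zspan (fun k : bool => if k then th else 1).

Lemma zthP y : zth y <-> exists u v : int, y = qth u%:~R v%:~R.
Proof.
rewrite /zth /qth; split=> [[c ->]|[u [v ->]]].
  by exists (c false), (c true); rewrite big_bool /= !scaler_int addrC.
by exists (fun k => if k then v else u); rewrite big_bool /= !scaler_int addrC.
Qed.

Lemma mulrn_denq (r : rat) : r *+ `|denq r| = (numq r)%:~R.
Proof. by rewrite numqE -mulr_natr -[in RHS](gez0_abs (ltW (denq_gt0 r))). Qed.

Lemma zth_clear_den x : exists2 d : nat, (0 < d)%N & zth (x *+ d).
Proof.
have [p [q ->]] := qth_surj x.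
exists (`|denq p| * `|denq q|)%N; first by rewrite muln_gt0 !absz_gt0 !denq_neq0.
apply/zthP; exists (numq p *+ `|denq q|), (numq q *+ `|denq p|).
rewrite /qth mulrnDl !scalerMnl mulrnA [in q *+ _]mulnC mulrnA !mulrn_denq.
by rewrite -!rmorphMn.
Qed.

Lemma order_den_bound : exists2 d : nat, (0 < d)%N & forall x, R x -> zth (x *+ d).
Proof.
case: R_order => _ [n [g [_ R_span]]] _.
have [dg dg_spec] : exists dg : 'I_n -> nat, forall i, (0 < dg i)%N /\ zth (g i *+ dg i).
  apply: (fin_all_exists (P := fun i d => (0 < d)%N /\ zth (g i *+ d))) => i.
  by have [d d_gt0 zd] := zth_clear_den (g i); exists d.
exists (\prod_i dg i); first by rewrite prodn_gt0 // => i; case: (dg_spec i).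
move=> _ /R_span [c ->]; rewrite -sumrMnl.
apply: big_ind; [exact: zspan0 | exact: zspanD | move=> i _].
rewrite (bigD1 i) //=; set P := (\prod_(j | j != i) dg j)%N.
have -> : g i *~ c i *+ (dg i * P) = (g i *+ dg i) *~ (c i * P) by ring.
by apply: zspanZ; case: (dg_spec i).
Qed.

End Coordinates.

Lemma order_inv_den (r : rat) : R r%:A -> R ((denq r)%:~R^-1 : rat)%:A.
Proof.
move=> Rr; have [u0 [v0 bezout]] := Bezoutz (numq r) (denq r).
have {}bezout : u0 * numq r + v0 * denq r = 1.
  by rewrite bezout /gcdz (eqP (coprime_num_den r)).
have -> : ((denq r)%:~R^-1 : rat) = u0%:~R * r + v0%:~R.
  have e : u0%:~R * (r * (denq r)%:~R) + v0%:~R * (denq r)%:~R = 1 :> rat.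
    by rewrite -numqE -!intrM -intrD bezout.
  have den_neq0 : (denq r)%:~R != 0 :> rat by rewrite intr_eq0 denq_neq0.
  by apply: (mulfI den_neq0); rewrite mulfV // -[LHS]e; ring.
rewrite scalerDl -scalerA !scaler_int.
apply: (subringD R_subring); apply: (subring_mulz R_subring) => //.
exact: (subring1 R_subring).
Qed.

(* All powers of [1 / denq r] lie in [R], so bounded denominators force
   [denq r ^ d %| d]. *)
Lemma order_rat_int (r : rat) : R r%:A -> exists z : int, r = z%:~R.
Proof.
move=> Rr; have [th _ th_irr] := order_irrational.
have [d d_gt0 dR] := order_den_bound th_irr.
have den_neq0 : (denq r)%:~R != 0 :> rat by rewrite intr_eq0 denq_neq0.
have /dR /zthP [u [v duv]] : R (((denq r)%:~R^-1 ^+ d : rat)%:A).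
  have -> : (((denq r)%:~R^-1 ^+ d : rat)%:A : L) = ((denq r)%:~R^-1 : rat)%:A ^+ d.
    by rewrite exprZn expr1n.
  by apply: (subringX R_subring); apply: order_inv_den.
have [d_u _] : (denq r)%:~R^-1 ^+ d *+ d = u%:~R :> rat /\ 0 = v%:~R :> rat.
  by apply: (qth_inj th_irr); rewrite -duv /qth scale0r addr0 scalerMnl.
have /dvdn_leq den_pow_le : (`|denq r| ^ d %| d)%N.
  have : (denq r ^+ d %| d%:Z)%Z.
    apply/dvdzP; exists u; apply: (@intr_inj rat).
    rewrite intrM rmorphXn /= -d_u -mulr_natr exprVn; field.
    exact: expf_neq0.
  by rewrite dvdzE abszX.
have den1 : denq r = 1.
  have := denq_gt0 r; have := den_pow_le d_gt0.
  by case: (ltnP 1 `|denq r|) => [/(ltn_expl d)|]; lia.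
by exists (numq r); rewrite numqE den1 mulr1.
Qed.

Lemma order_mulrn_int y (d : nat) (k : int) :
  (0 < d)%N -> R y -> y *+ d = k%:~R -> exists a : int, y = a%:~R.
Proof.
move=> d_gt0 Ry yk.
have y_q : y = (k%:~R / d%:R : rat)%:A.
  apply: (mulrn_rat_inj d_gt0); rewrite /= yk scalerMnl -mulr_natr.
  by rewrite divfK ?pnatr_eq0 -?lt0n // scaler_int.
have [a q_a] : exists a : int, (k%:~R / d%:R : rat) = a%:~R.
  by apply: order_rat_int; rewrite -y_q.
by exists a; rewrite y_q q_a scaler_int.
Qed.

Lemma order_basis : exists (w : L) (s t : int),
  [/\ w ^+ 2 = s%:~R * w + t%:~R,
      (forall u v : int, u%:~R + v%:~R * w = 0 :> L -> u = 0 /\ v = 0) &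
      forall x, R x <-> exists u v : int, x = u%:~R + v%:~R * w].
Proof.
have [th Rth th_irr] := order_irrational.
have [d d_gt0 dR] := order_den_bound th_irr.
pose V v := exists x u, R x /\ x *+ d = qth th u%:~R v%:~R.
have V_sub v v' : V v -> V v' -> V (v - v').
  move=> [x [u [Rx xE]]] [x' [u' [Rx' xE']]]; exists (x - x'), (u - u').
  split; first exact: (subringB R_subring).
  by rewrite mulrnBl xE xE' /qth !intrB !scalerBl; ring.
have V_d : V d by exists th, 0; rewrite /qth scale0r add0r scaler_nat.
have [|v0 [v0_gt0 [w0 [u0 [Rw0 w0E]]] v0_dvd]] := int_subgroup_cyclic V_sub V_d.
  by rewrite eqz_nat -lt0n.
have R_w0 x : R x <-> exists a b : int, x = a%:~R + b%:~R * w0.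
  split=> [Rx|[a [b ->]]]; last first.
    apply: (subringD R_subring); first exact: subring_int.
    by apply: (subringM R_subring) => //; exact: subring_int.
  have /zthP [u [v xE]] := dR x Rx.
  have /dvdzP [b v_b] := v0_dvd v (ex_intro _ x (ex_intro _ u (conj Rx xE))).
  have [a y_a] : exists a : int, x - b%:~R * w0 = a%:~R.
    apply: (order_mulrn_int (k := u - b * u0) d_gt0).
      apply: (subringB R_subring) => //; apply: (subringM R_subring) => //.
      exact: subring_int.
    by rewrite mulrnBl -mulrnAr xE w0E v_b /qth !scaler_int; ring.
  by exists a, b; rewrite -y_a subrK.
have [t [s w0_sq]] := (R_w0 (w0 ^+ 2)).1 (subringX R_subring _ Rw0).
exists w0, s, t; split=> //; first by rewrite w0_sq addrC.
move=> u v uv0.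
have : qth th (u * d + v * u0)%:~R (v * v0)%:~R = qth th 0 0.
  transitivity ((u%:~R + v%:~R * w0) *+ d); last by rewrite uv0 mul0rn /qth !scale0r addr0.
  by rewrite mulrnDl -mulrnAr w0E /qth !scaler_int; ring.
move=> /(qth_inj th_irr) [/eqP + /eqP]; rewrite !intr_eq0 => /eqP ud0 /eqP vv0.
have v_0 : v = 0 by nia.
by split=> //; move: ud0; rewrite v_0; nia.
Qed.

End OrderBasis.

Theorem theorem3p3 (L : fieldExtType rat) (R : L -> Prop) :
  \dim {:L} = 2%N -> is_order R ->
  forall I J : L -> Prop,
    is_ideal R I -> is_ideal R J -> nonzero_ideal I -> nonzero_ideal J ->
    exists a b c : nat,
      [/\ has_index R I a, has_index R J b, has_index R (ideal_mul I J) c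
        & (a * b <= c)%N].
Proof.
move=> L_dim2 R_order I J I_ideal J_ideal I_nz J_nz.
have [w [s [t [w_sq w_indep R_zwP]]]] := order_basis L_dim2 R_order.
exact: (index_ideal_mul_ge w_sq w_indep R_zwP I_ideal J_ideal I_nz J_nz).
Qed.
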